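(* Let $d\ge2$, $n\ge1$, $\gamma$ a positive conductivity on the lattice graph below, and $d-1\le t\le dn-1$. For each node $p\in D\cup\partial D$ define $\mathbf v_p\in\mathbb R^{D\cup\partial D}$ by $(\mathbf v_p)_q=\gamma_{pq}$ if $q\in\mathcal N(p)$, $(\mathbf v_p)_p=-\sum_{r\in\mathcal N(p)}\gamma_{pr}$, and $(\mathbf v_p)_q=0$ otherwise. Then there is an orthogonal direct sum decomposition (with respect to the standard inner product) $$\mathcal U^{(t)}\oplus\operatorname{span}\{\mathbf v_p|_{L_t^{\mathcal S}\cup J_t^{\mathcal S}}:p\in L_{t+1}^{\mathcal S}\}=\mathbb R^{L_t^{\mathcal S}\cup J_t^{\mathcal S}}.$$
   Context: Lattice: $D=\{x\in\mathbb Z^d:1\le x_i\le n\ \forall i\}$, $\partial D=\{p\in\mathbb Z^d:\min_{q\in D}\|q-p\|_{\ell^1}=1\}$; $E$ = unordered pairs $pq\subseteq D\cup\partial D$ with $\|p-q\|_{\ell^1}=1$, not both in $\partial D$; $\mathcal N(p)=\{q:pq\in E\}$. Conductivity $\gamma:E\to(0,\infty)$, symmetric. $S_\gamma\varphi$ is the unique $\mathbf u\in\mathbb R^{D\cup\partial D}$ with $\sum_{q\in\mathcal N(p)}\gamma_{pq}(\mathbf u_q-\mathbf u_p)=0$ for all $p\in D$ and $\mathbf u=\varphi$ on $\partial D$. Functions on subsets are extended by zero. With $s(x)=\sum_ix_i$: $L_t=\{x\in D:s(x)=t\}$, $L_t^{\mathcal S}=\{x\in D:s(x)\le t\}$, $K_t^+=\{x\in\partial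 D:s(x)=t,\max_ix_i=n+1\}$, $K_t^-=\{x\in\partial D:s(x)=t,\min_ix_i=0\}$, $K_t^{\mathcal S\pm}=\bigcup_{\ell\le t}K_\ell^\pm$, $J_t^{\mathcal S}=K_t^{\mathcal S-}\cup K_{t+1}^{\mathcal S+}$. $T_1^{(t)}:\mathbb R^{J_t^{\mathcal S}}\to\mathbb R^{L_{t+1}}$, $\varphi\mapsto(S_\gamma\varphi)|_{L_{t+1}}$. $\mathcal U^{(t)}=\{(S_\gamma\varphi)|_{J_t^{\mathcal S}\cup L_t^{\mathcal S}}:\varphi\in\ker T_1^{(t)}\}\subseteq\mathbb R^{J_t^{\mathcal S}\cup L_t^{\mathcal S}}$. *)

From mathcomp Require Import all_boot all_order all_algebra.
From mathcomp Require Import reals.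
From Stdlib Require Import ClassicalEpsilon.
Set Implicit Arguments. Unset Strict Implicit. Unset Printing Implicit Defensive.
Import Order.TTheory GRing.Theory Num.Theory.
Local Open Scope ring_scope.

(* Lattice points with coordinates in {0,..,n+1}; every point of D ∪ ∂D is of this form. *)
Definition pt (d n : nat) := {ffun 'I_d -> 'I_n.+2}.

Definition ssum d n (x : pt d n) : nat := (\sum_(i < d) (x i : nat))%N.

Definition l1 d n (x y : pt d n) : nat :=
  (\sum_(i < d) (((x i : nat) - y i) + ((y i : nat) - x i)))%N.

Definition inD d n (x : pt d n) : bool := [forall i, (0 < (x i : nat) <= n)%N].

Definition inB d n (x : pt d n) : bool :=
  ~~ inD x && [exists q : pt d n, inD q && (l1 q x == 1%N)].

Definition inV d n (x : pt d n) : bool := inD x || inB x.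

Definition edge d n (p q : pt d n) : bool :=
  [&& inV p, inV q, l1 p q == 1%N & ~~ (inB p && inB q)].

Definition Lv d n (t : nat) : {set pt d n} := [set x | inD x & ssum x == t].
Definition LS d n (t : nat) : {set pt d n} := [set x | inD x & (ssum x <= t)%N].
Definition Kp d n (t : nat) : {set pt d n} :=
  [set x | [&& inB x, ssum x == t & [exists i, (x i : nat) == n.+1]]].
Definition Km d n (t : nat) : {set pt d n} :=
  [set x | [&& inB x, ssum x == t & [exists i, (x i : nat) == 0%N]]].
Definition KSp d n (t : nat) : {set pt d n} := \bigcup_(l < t.+1) Kp d n l.
Definition KSm d n (t : nat) : {set pt d n} := \bigcup_(l < t.+1) Km d n l.
Definition JS d n (t : nat) : {set pt d n} := KSm d n t :|: KSp d n t.+1.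

Definition AS d n (t : nat) : {set pt d n} := LS d n t :|: JS d n t.

Definition restr d n (R : realType) (A : {set pt d n}) (f : pt d n -> R) : pt d n -> R :=
  fun x => if x \in A then f x else 0.

Definition dirichlet d n (R : realType) (gam : pt d n -> pt d n -> R)
    (phi u : pt d n -> R) : Prop :=
  (forall p, inD p -> \sum_(q | edge p q) gam p q * (u q - u p) = 0) /\
  (forall p, inB p -> u p = phi p) /\
  (forall p, ~~ inV p -> u p = 0).

Definition Sgam d n (R : realType) (gam : pt d n -> pt d n -> R) (phi : pt d n -> R)
  : pt d n -> R :=
  epsilon (inhabits (fun _ => 0)) (dirichlet gam phi).

(* U^(t): restrictions to L_t^S ∪ J_t^S of S_gamma phi, phi ∈ R^{J_t^S} in ker T_1^(t) *)
Definition Ut d n (R : realType) (gam : pt d n -> pt d n -> R) (t : nat)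
    (u : pt d n -> R) : Prop :=
  exists phi : pt d n -> R,
    (forall x, x \notin JS d n t -> phi x = 0) /\
    (forall x, x \in Lv d n t.+1 -> Sgam gam phi x = 0) /\
    (forall x, u x = restr (AS d n t) (Sgam gam phi) x).

Definition vp d n (R : realType) (gam : pt d n -> pt d n -> R) (p : pt d n) : pt d n -> R :=
  fun q => if edge p q then gam p q
           else if q == p then - \sum_(r | edge p r) gam p r else 0.

Definition Wt d n (R : realType) (gam : pt d n -> pt d n -> R) (t : nat)
    (w : pt d n -> R) : Prop :=
  exists c : pt d n -> R,
    forall x, w x = \sum_(p in LS d n t.+1) c p * restr (AS d n t) (vp gam p) x.

Definition dotp d n (R : realType) (u w : pt d n -> R) : R := \sum_(x : pt d n) u x * w x.

From mathcomp Require Import all_boot all_order all_algebra.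
From mathcomp Require Import reals zify ring.
From Stdlib Require Import ClassicalEpsilon.
Set Implicit Arguments. Unset Strict Implicit. Unset Printing Implicit Defensive.
Import Order.TTheory GRing.Theory Num.Theory.
Local Open Scope ring_scope.

(* Green's identity shows that a function which is harmonic on a set of interior
   nodes and vanishes around it has zero Dirichlet energy, hence is constant along
   edges; lowering one coordinate always leads out of D, so it vanishes.  This gives
   uniqueness, and by finite dimension existence, for the Dirichlet problem.

   If u = S_gamma phi with phi in ker T_1^(t), then u vanishes on level t+1 and,
   by uniqueness, on all higher levels of D; so u is supported on
   L_t^S ∪ J_t^S and its inner product with the restriction of v_p is the discrete
   Laplacian of u at p, which is 0.  Conversely a vector g supported on
   L_t^S ∪ J_t^S and orthogonal to every restricted v_p is harmonic at each node
   of level <= t+1 because these inner products are its Laplacian there, and at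
   each higher node because its whole neighbourhood lies outside the support; so
   g = S_gamma (g|_J).  Hence U^(t) is the orthogonal complement of the span,
   and the decomposition is the orthogonal projection onto the span. *)

Section FunRow.
Variable R : comRingType.

Definition rowfun (T : finType) (u : T -> R) : 'rV[R]_#|T| := \row_i u (enum_val i).

Definition kernel_mx (S T : finType) (K : S -> T -> R) : 'M[R]_(#|T|, #|S|) :=
  \matrix_(i, j) K (enum_val j) (enum_val i).

Lemma rowfun_inj (T : finType) (u v : T -> R) : rowfun u = rowfun v -> u =1 v.
Proof. by move/rowP => uv x; have := uv (enum_rank x); rewrite !mxE enum_rankK. Qed.

Lemma rowfunE (T : finType) (v : 'rV[R]_#|T|) : v = rowfun (fun x => v 0 (enum_rank x)).
Proof. by apply/rowP => i; rewrite !mxE enum_valK. Qed.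

Lemma mul_rowfun_mx (S T : finType) (K : S -> T -> R) (u : T -> R) :
  rowfun u *m kernel_mx K = rowfun (fun s => \sum_t K s t * u t).
Proof.
apply/rowP => j; rewrite !mxE (big_enum_val _ (A := T)) /=.
by apply: eq_bigr => i _; rewrite !mxE mulrC.
Qed.

End FunRow.

Lemma sum_sqr_eq0 (R : realDomainType) (T : finType) (f : T -> R) :
  \sum_x f x * f x = 0 -> f =1 (fun _ => 0).
Proof.
move=> /psumr_eq0P f0 x; apply/eqP; rewrite -[_ == 0]orbb -mulf_eq0.
by apply/eqP/f0 => // y _; rewrite -expr2 sqr_ge0.
Qed.

Lemma kernel_inj_surj (R : fieldType) (T : finType) (K : T -> T -> R) :
  (forall u : T -> R, (forall q, \sum_p K q p * u p = 0) -> u =1 (fun _ => 0)) ->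
  forall b : T -> R, exists u : T -> R, forall q, \sum_p K q p * u p = b q.
Proof.
move=> K_inj b.
have K_unit : kernel_mx K \in unitmx.
  rewrite -row_free_unit; apply/inj_row_free => v; rewrite (rowfunE v).
  set u := fun x => _; rewrite mul_rowfun_mx => Ku0.
  have Ku_eq0 q : \sum_p K q p * u p = 0.
    by move/rowP: Ku0 => /(_ (enum_rank q)); rewrite !mxE enum_rankK.
  by apply/rowP => i; rewrite !mxE; apply: K_inj Ku_eq0 _.
set v := rowfun b *m invmx (kernel_mx K).
exists (fun x => v 0 (enum_rank x)); apply: rowfun_inj.
by rewrite -mul_rowfun_mx -rowfunE mulmxKV.
Qed.

(* Over a real field [v *m B *m B^T = 0] forces [v *m B = 0] (a sum of squares
   vanishes), so [B *m B^T] has the rank of [B]. *)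
Lemma trmx_submx_gram (R : realFieldType) m n (B : 'M[R]_(m, n)) : (B^T <= B *m B^T)%MS.
Proof.
have sub_B : (B *m B^T <= B^T)%MS by apply: submxMl.
suff rk : (\rank B^T <= \rank (B *m B^T))%N.
  by rewrite -(mxrank_leqif_sup sub_B).2 eqn_leq rk (mxrank_leqif_sup sub_B).1.
have ker_sub : (kermx (B *m B^T) <= kermx B)%MS.
  apply/sub_kermxP; set X := kermx _ *m B; apply/matrixP => i j.
  have XX0 : X *m X^T = 0 by rewrite trmx_mul !mulmxA -(mulmxA (kermx _)) mulmx_ker mul0mx.
  suff /(_ j) -> : X i =1 (fun _ => 0) by rewrite mxE.
  apply: sum_sqr_eq0; move/matrixP: XX0 => /(_ i i); rewrite !mxE.
  by apply: etrans; apply: eq_bigr => k _; rewrite [X^T _ _]mxE.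
have := mxrankS ker_sub; rewrite !mxrank_ker mxrank_tr.
have := rank_leq_row (B *m B^T); have := rank_leq_row B; lia.
Qed.

Lemma orthogonal_projection (R : realFieldType) (I T : finType)
    (w : I -> T -> R) (f : T -> R) :
  exists c : I -> R, forall i, \sum_x w i x * (f x - \sum_j c j * w j x) = 0.
Proof.
set B := kernel_mx (fun x i => w i x).
have BT : B^T = kernel_mx w by apply/matrixP => i j; rewrite !mxE.
have /submxP [C fBC] : (rowfun f *m B^T <= B *m B^T)%MS.
  exact: submx_trans (submxMl _ _) (trmx_submx_gram B).
have residual_perp : (rowfun f - C *m B) *m B^T = 0 by rewrite mulmxBl fBC mulmxA subrr.
exists (fun i => C 0 (enum_rank i)) => i.
move: residual_perp; rewrite {1}(rowfunE C) mul_rowfun_mx.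
have -> : forall g h : T -> R, rowfun g - rowfun h = rowfun (fun x => g x - h x).
  by move=> g h; apply/rowP => k; rewrite !mxE.
rewrite BT mul_rowfun_mx => /rowP /(_ (enum_rank i)); rewrite !mxE enum_rankK => perp_i.
rewrite -[RHS]perp_i.
by apply: eq_bigr => x _; congr (_ * (_ - _)); apply: eq_bigr => j _; rewrite mulrC.
Qed.

Definition laplacian (R : ringType) (T : finType) (e : rel T) (c : T -> T -> R)
    (u : T -> R) (p : T) : R :=
  \sum_(q | e p q) c p q * (u q - u p).

Lemma laplacianB (R : ringType) (T : finType) (e : rel T) (c : T -> T -> R)
    (u v : T -> R) p :
  laplacian e c (fun x => u x - v x) p = laplacian e c u p - laplacian e c v p.
Proof.
rewrite /laplacian -sumrB; apply: eq_bigr => q _.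
by rewrite -mulrBr; congr (_ * _); rewrite !opprB addrACA [RHS]addrACA (addrC (- v q)).
Qed.

Section Green.
Variables (R : realDomainType) (T : finType) (e : rel T) (c : T -> T -> R).
Hypothesis e_sym : symmetric e.
Hypothesis c_sym : forall p q, e p q -> c p q = c q p.

Lemma green_identity (u : T -> R) :
  \sum_p \sum_(q | e p q) c p q * (u q - u p) ^+ 2 =
  - (\sum_p u p * laplacian e c u p) *+ 2.
Proof.
have swap : \sum_p \sum_(q | e p q) c p q * (u q * (u p - u q)) =
            \sum_p u p * laplacian e c u p.
  under eq_bigr do rewrite big_mkcond; rewrite exchange_big /=.
  apply: eq_bigr => p _; rewrite /laplacian mulr_sumr [RHS]big_mkcond.
  apply: eq_bigr => q _; rewrite e_sym; case: ifP => // epq.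
  by rewrite c_sym 1?e_sym // mulrCA.
rewrite mulr2n -{1}swap /laplacian -!sumrN -big_split; apply: eq_bigr => p _.
by rewrite mulr_sumr -!sumrN -big_split; apply: eq_bigr => q _ /=; ring.
Qed.

Hypothesis c_pos : forall p q, e p q -> 0 < c p q.

Lemma energy0_edge_const (u : T -> R) :
  \sum_p u p * laplacian e c u p = 0 -> forall p q, e p q -> u p = u q.
Proof.
move=> energy0 p q epq.
have term_ge0 p' q' : e p' q' -> 0 <= c p' q' * (u q' - u p') ^+ 2.
  by move=> e'; rewrite mulr_ge0 ?sqr_ge0 ?ltW ?c_pos.
have /psumr_eq0P row0 : \sum_p \sum_(q | e p q) c p q * (u q - u p) ^+ 2 = 0.
  by rewrite green_identity energy0 oppr0 mul0rn.
have /eqP := psumr_eq0P (term_ge0 p) (row0 (fun p _ => sumr_ge0 _ (term_ge0 p)) p isT) epq.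
by rewrite mulf_eq0 (gt_eqF (c_pos epq)) sqrf_eq0 subr_eq0 eq_sym => /eqP.
Qed.

End Green.

Section Lattice.
Variables d n : nat.
Implicit Types p q x : pt d n.

Lemma l1C p q : l1 p q = l1 q p.
Proof. by apply: eq_bigr => i _; rewrite addnC. Qed.

Lemma edge_sym : symmetric (@edge d n).
Proof.
by move=> p q; rewrite /edge l1C; case: (inV p) (inV q) (inB p) (inB q) => [] [] [] [].
Qed.

Lemma edge_l1 p q : edge p q -> l1 p q = 1%N.
Proof. by case/and4P => _ _ /eqP. Qed.

Lemma edge_irr p : edge p p = false.
Proof. by rewrite /edge /l1 big1 ?andbF // => i _; rewrite subnn. Qed.

Lemma l1_eq1P p q : l1 p q = 1%N ->
  exists i, (forall j, j != i -> (q j : nat) = p j) /\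
            ((q i : nat) = (p i).+1 \/ (p i : nat) = (q i).+1).
Proof.
rewrite /l1.
have [i dist_i|dist0] := pickP (fun i => (p i - q i + (q i - p i))%N != 0%N); last first.
  by rewrite big1 // => i _; move/negbFE/eqP: (dist0 i).
rewrite (bigD1 i) //= => sum1; exists i.
move: sum1 (sum_nat_eq0 (fun j => j != i) (fun j => p j - q j + (q j - p j))%N) dist_i => /=.
set rest := bigop _ _ _ => sum1 + dist_i.
have rest0 : rest = 0%N by lia.
move: rest0 => /eqP -> /esym/forallP rest0.
split; last by lia.
by move=> j ji; move: (rest0 j); rewrite ji => /eqP; lia.
Qed.

Lemma ssum_off p q i : (forall j, j != i -> (q j : nat) = p j) ->
  (ssum q + p i = ssum p + q i)%N.
Proof.
have ssum_at x : ssum x = (x i + \sum_(j | j != i) x j)%N by rewrite /ssum (bigD1 i).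
move=> qp; have same_rest : (\sum_(j | j != i) q j = \sum_(j | j != i) p j)%N.
  by apply: eq_bigr.
by rewrite !ssum_at same_rest; lia.
Qed.

Lemma l1_eq1_ssum p q : l1 p q = 1%N -> (ssum p <= (ssum q).+1)%N.
Proof. by case/l1_eq1P => i [/ssum_off]; lia. Qed.

Lemma l1_eq1_top p q j : inD p -> l1 p q = 1%N -> (q j : nat) = n.+1 ->
  ssum q = (ssum p).+1.
Proof.
move=> /forallP pD /l1_eq1P [i [qp qi]] qj.
have ji : j == i by apply: contraLR (pD j) => /qp <-; rewrite qj; lia.
by move: qi (pD i) (ssum_off qp); rewrite -(eqP ji) qj; lia.
Qed.

Definition lower p i : pt d n := [ffun j => if j == i then inord (p j).-1 else p j].

Lemma lower_at p i : (lower p i i : nat) = (p i).-1.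
Proof. by rewrite ffunE eqxx inordK //; have := ltn_ord (p i); lia. Qed.

Lemma edge_lower p i : inD p -> edge p (lower p i).
Proof.
move=> pD; have l1_1 : l1 p (lower p i) = 1%N.
  rewrite /l1 (bigD1 i) //= big1 => [|j ji]; last by rewrite ffunE (negbTE ji) subnn.
  by rewrite lower_at; move/forallP: pD => /(_ i); lia.
have pB : ~~ inB p by rewrite /inB pD.
apply/and4P; split; rewrite ?l1_1 ?(negbTE pB) ?andbF //; first by rewrite /inV pD.
rewrite /inV; case: (boolP (inD _)) => //= lD.
by rewrite /inB lD; apply/existsP; exists p; rewrite pD l1_1.
Qed.

End Lattice.

Section Dirichlet.
Variables (R : realType) (d n : nat) (gam : pt d n -> pt d n -> R).
Hypothesis gam_sym : forall p q, edge p q -> gam p q = gam q p.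
Hypothesis gam_pos : forall p q, edge p q -> 0 < gam p q.
Hypothesis d_gt0 : (0 < d)%N.

Local Notation lap := (laplacian (@edge d n) gam).

Lemma vp_dotE p (u : pt d n -> R) : \sum_r vp gam p r * u r = lap u p.
Proof.
have split_vp r : vp gam p r * u r = (if edge p r then gam p r * u r else 0) +
    (if r == p then - (\sum_(q | edge p q) gam p q) * u p else 0).
  rewrite /vp; case: ifP => [epr|_]; last by case: eqP => [->|_]; rewrite ?add0r ?mul0r.
  by rewrite (_ : r == p = false) ?addr0 //; apply: contraTF epr => /eqP ->; rewrite edge_irr.
rewrite (eq_bigr _ (fun r _ => split_vp r)) big_split /= -!big_mkcond big_pred1_eq /=.
by rewrite mulNr mulr_suml -sumrB; apply: eq_bigr => q _; rewrite mulrBr.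
Qed.

Lemma harmonic_on_vanish (Om : pred (pt d n)) (u : pt d n -> R) :
  {subset Om <= @inD d n} ->
  (forall p q, Om p -> edge p q -> ~~ Om q -> u q = 0) ->
  (forall p, Om p -> lap u p = 0) ->
  forall p, Om p -> u p = 0.
Proof.
move=> OmD u_out harm.
(* [z] has zero energy, and lowering coordinate [i0] from a point of [Om] leaves [D]. *)
pose z p := if Om p then u p else 0.
have z_harm p : z p * lap z p = 0.
  case: (boolP (Om p)) => Omp; last by rewrite /z (negbTE Omp) mul0r.
  suff -> : lap z p = lap u p by rewrite harm // mulr0.
  apply: eq_bigr => q epq; rewrite /z Omp.
  by case: ifP => // /negbT/(u_out p q Omp epq) ->.
have energy0 : \sum_p z p * lap z p = 0 by apply: big1 => p _; exact: z_harm.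
have z_const := energy0_edge_const (@edge_sym d n) gam_sym gam_pos energy0.
pose i0 := Ordinal d_gt0.
suff z0 k (p : pt d n) : (p i0 : nat) = k -> z p = 0.
  by move=> p Omp; rewrite -(z0 _ p erefl) /z Omp.
elim: k p => [|k IH] p pk; case: (boolP (Om p)) => Omp; try by rewrite /z (negbTE Omp).
  by move/forallP: (OmD p Omp) => /(_ i0); rewrite pk.
by rewrite (z_const _ _ (edge_lower i0 (OmD p Omp))) IH // lower_at pk.
Qed.

Lemma dirichlet_uniq (phi u v : pt d n -> R) :
  dirichlet gam phi u -> dirichlet gam phi v -> u =1 v.
Proof.
move=> [u_harm [u_bd u_out]] [v_harm [v_bd v_out]] x.
apply/eqP; rewrite -subr_eq0; apply/eqP.
have off_D y : ~~ inD y -> u y - v y = 0.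
  move=> yD; case: (boolP (inB y)) => yB; first by rewrite u_bd // v_bd // subrr.
  by rewrite u_out ?v_out ?subrr // /inV negb_or yD yB.
case: (boolP (inD x)) => [xD|/off_D //].
apply: (harmonic_on_vanish (Om := @inD d n) (u := fun y => u y - v y)) => // [p q _ _|p pD].
  exact: off_D.
by rewrite laplacianB /laplacian u_harm // v_harm // subrr.
Qed.

Lemma dirichlet_exists (phi : pt d n -> R) : exists u, dirichlet gam phi u.
Proof.
pose K q p : R := if inD q then vp gam q p else (p == q)%:R.
pose b q := if inD q then 0 else if inB q then phi q else 0.
have K_apply (u : pt d n -> R) q : \sum_p K q p * u p = if inD q then lap u q else u q.
  rewrite /K; case: ifP => _; first exact: vp_dotE.
  by rewrite (bigD1 q) //= eqxx mul1r big1 ?addr0 // => p /negbTE ->; rewrite mul0r.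
have [|u Ku] := kernel_inj_surj (K := K) _ b.
  move=> u Ku0 p; have [pD|pD] := boolP (inD p); last first.
    by rewrite -(Ku0 p) K_apply (negbTE pD).
  apply: (harmonic_on_vanish (Om := @inD d n)) => // [q r _ _ rD|q qD].
    by rewrite -(Ku0 r) K_apply (negbTE rD).
  by rewrite -(Ku0 q) K_apply qD.
exists u; split; [|split] => p; move: (Ku p); rewrite K_apply /b.
- by move=> + pD; rewrite pD.
- by move=> + pB; have /andP [/negbTE -> _] := pB; rewrite pB.
- by rewrite /inV negb_or => + /andP [/negbTE pD /negbTE pB]; rewrite pD pB.
Qed.

Lemma Sgam_dirichlet (phi : pt d n -> R) : dirichlet gam phi (Sgam gam phi).
Proof. exact: epsilon_spec (dirichlet_exists phi). Qed.

Variable t : nat.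

Lemma mem_KSm x : x \in KSm d n t -> inB x /\ (ssum x <= t)%N.
Proof.
by case/bigcupP => l _; rewrite inE => /and3P [xB /eqP -> _]; rewrite -ltnS ltn_ord.
Qed.

Lemma mem_KSp x : x \in KSp d n t.+1 ->
  [/\ inB x, (ssum x <= t.+1)%N & exists j, (x j : nat) = n.+1].
Proof.
case/bigcupP => l _; rewrite inE => /and3P [xB /eqP -> /existsP [j /eqP xj]].
by split => //; [rewrite -ltnS ltn_ord | exists j].
Qed.

Lemma JS_inB x : x \in JS d n t -> inB x.
Proof. by rewrite in_setU => /orP [/mem_KSm [] | /mem_KSp []]. Qed.

Lemma mem_AS x : (x \in AS d n t) = (inD x && (ssum x <= t)%N) || (x \in JS d n t).
Proof. by rewrite in_setU inE. Qed.

Lemma edge_above_level p q : inD p -> (t.+2 <= ssum p)%N -> edge p q ->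
  (t < ssum q)%N /\ q \notin JS d n t.
Proof.
move=> pD sp /edge_l1 pq; have := l1_eq1_ssum pq => sq; split; first by lia.
apply/negP; rewrite in_setU.
by case/orP => [/mem_KSm [_] | /mem_KSp [_ + [j /(l1_eq1_top pD pq)]]]; lia.
Qed.

Lemma Sgam_vanish_off_AS (phi : pt d n -> R) :
  (forall x, x \notin JS d n t -> phi x = 0) ->
  (forall x, x \in Lv d n t.+1 -> Sgam gam phi x = 0) ->
  forall x, x \notin AS d n t -> Sgam gam phi x = 0.
Proof.
move=> phiJ; have [s_harm [s_bd s_out]] := Sgam_dirichlet phi.
set s := Sgam gam phi in s_harm s_bd s_out * => s_level.
have s_offJ x : x \notin JS d n t -> ~~ inD x -> s x = 0.
  move=> xJ xD; case: (boolP (inB x)) => xB; first by rewrite s_bd // phiJ.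
  by rewrite s_out // /inV negb_or xD.
have s_level1 x : inD x -> ssum x = t.+1 -> s x = 0.
  by move=> xD xs; apply: s_level; rewrite inE xD xs eqxx.
pose high : pred (pt d n) := fun x => inD x && (t.+2 <= ssum x)%N.
have s_high : forall x, high x -> s x = 0.
  apply: harmonic_on_vanish => [x /andP [] // | p q /andP [pD sp] epq | p /andP [pD _]].
  - have [sq qJ] := edge_above_level pD sp epq.
    case: (boolP (inD q)) => qD; last by rewrite s_offJ.
    by rewrite /high qD -ltnNge => sq'; apply: s_level1 => //; lia.
  - exact: s_harm.
move=> x; rewrite mem_AS negb_or => /andP [xLS xJ].
case: (boolP (inD x)) => xD; last exact: s_offJ.
move: xLS; rewrite xD -ltnNge => xt.
have [xt1|xt2] := eqVneq (ssum x) t.+1; first exact: s_level1.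
by apply: s_high; rewrite /high xD; lia.
Qed.

Lemma D_notin_JS x : inD x -> x \notin JS d n t.
Proof. by apply: contraL => /JS_inB /andP []. Qed.

Lemma notin_AS_above x : (t < ssum x)%N -> x \notin JS d n t -> x \notin AS d n t.
Proof. by move=> xt xJ; rewrite mem_AS (negbTE xJ) orbF leqNgt xt andbF. Qed.

Lemma Ut_perp_vp u p : Ut gam t u -> p \in LS d n t.+1 ->
  \sum_x u x * restr (AS d n t) (vp gam p) x = 0.
Proof.
move=> [phi [phiJ [phiL u_eq]]]; rewrite inE => /andP [pD _].
have [s_harm _] := Sgam_dirichlet phi.
transitivity (\sum_x vp gam p x * Sgam gam phi x); last by rewrite vp_dotE; exact: s_harm.
apply: eq_bigr => x _; rewrite u_eq /restr; case: ifP => xA; first by rewrite mulrC.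
by rewrite Sgam_vanish_off_AS ?xA ?mulr0 ?mul0r.
Qed.

Lemma perp_vp_Ut g : (forall x, x \notin AS d n t -> g x = 0) ->
  (forall p, p \in LS d n t.+1 -> \sum_x g x * restr (AS d n t) (vp gam p) x = 0) ->
  Ut gam t g.
Proof.
move=> gA g_perp; set phi := restr (JS d n t) g.
have g_dir : dirichlet gam phi g.
  split; [|split] => p.
  - move=> pD; have [sp|sp] := leqP (ssum p) t.+1.
      transitivity (\sum_x vp gam p x * g x); first by rewrite vp_dotE.
      rewrite -[RHS](g_perp p) ?inE ?pD //; apply: eq_bigr => x _; rewrite /restr.
      by case: ifP => xA; [rewrite mulrC | rewrite gA ?xA ?mulr0 ?mul0r].
    apply: big1 => q epq; have [sq qJ] := edge_above_level pD sp epq.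
    have pA : p \notin AS d n t by rewrite notin_AS_above ?D_notin_JS //; lia.
    by rewrite !gA ?subrr ?mulr0 // notin_AS_above.
  - move=> pB; rewrite /phi /restr; case: ifP => // pJ.
    by move: pB => /andP [/negbTE pD _]; rewrite gA // mem_AS pJ pD.
  - rewrite /inV negb_or => /andP [pD pB]; rewrite gA // mem_AS (negbTE pD) /=.
    by apply: contra pB; apply: JS_inB.
have Sg := dirichlet_uniq (Sgam_dirichlet phi) g_dir.
exists phi; split; first by move=> x xJ; rewrite /phi /restr (negbTE xJ).
split.
  by move=> x /[!inE] /andP [xD /eqP xt]; rewrite Sg gA // notin_AS_above ?D_notin_JS ?xt.
by move=> x; rewrite /restr Sg; case: ifP => // /negbT /gA.
Qed.

Lemma Ut_Wt_orthogonal u w : Ut gam t u -> Wt gam t w -> dotp u w = 0.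
Proof.
move=> uU [c w_eq]; rewrite /dotp; under eq_bigr do rewrite w_eq mulr_sumr.
rewrite exchange_big; apply: big1 => p pL.
rewrite -[RHS](mulr0 (c p)) -[X in _ * X](Ut_perp_vp uU pL) mulr_sumr.
by apply: eq_bigr => x _; rewrite mulrCA.
Qed.

Lemma Ut_Wt_direct f : Ut gam t f -> Wt gam t f -> f =1 (fun _ => 0).
Proof. by move=> fU fW; apply: sum_sqr_eq0; apply: Ut_Wt_orthogonal. Qed.

Lemma Ut_Wt_span f : (forall x, x \notin AS d n t -> f x = 0) ->
  exists u w, [/\ Ut gam t u, Wt gam t w & forall x, f x = u x + w x].
Proof.
move=> fA.
pose w p x := if p \in LS d n t.+1 then restr (AS d n t) (vp gam p) x else 0.
have [c c_perp] := orthogonal_projection w f.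
pose proj x := \sum_p c p * w p x.
exists (fun x => f x - proj x), proj; split; last by move=> x; rewrite subrK.
- apply: perp_vp_Ut => [x xA | p pL].
    by rewrite fA // /proj big1 ?subr0 // => p _; rewrite /w /restr (negbTE xA) if_same mulr0.
  by rewrite -[RHS](c_perp p); apply: eq_bigr => x _; rewrite mulrC /w pL.
- exists c => x; rewrite /proj [RHS]big_mkcond; apply: eq_bigr => p _.
  by rewrite /w; case: ifP; rewrite ?mulr0.
Qed.

End Dirichlet.

Theorem lemma2p4 (R : realType) (d n t : nat) (gam : pt d n -> pt d n -> R) :
  (2 <= d)%N -> (1 <= n)%N -> (d.-1 <= t)%N -> (t <= (d * n).-1)%N ->
  (forall p q, edge p q -> gam p q = gam q p) ->
  (forall p q, edge p q -> 0 < gam p q) ->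
  (* orthogonality *)
  (forall u w, Ut gam t u -> Wt gam t w -> dotp u w = 0) /\
  (* the sum is direct *)
  (forall f, Ut gam t f -> Wt gam t f -> forall x, f x = 0) /\
  (* the sum is all of R^{L_t^S ∪ J_t^S} *)
  (forall f : pt d n -> R, (forall x, x \notin AS d n t -> f x = 0) ->
     exists u w, [/\ Ut gam t u, Wt gam t w & forall x, f x = u x + w x]).
Proof.
move=> d_ge2 _ _ _ gam_sym gam_pos; have d_gt0 : (0 < d)%N by apply: ltnW.
split; [|split].
- exact: (Ut_Wt_orthogonal gam_sym gam_pos d_gt0).
- exact: (Ut_Wt_direct gam_sym gam_pos d_gt0).
- exact: (Ut_Wt_span gam_sym gam_pos d_gt0).
Qed.
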